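(* Let $r,t,t_1,\dots,t_r$ be positive integers with $t_1+t_2+\dots+t_r=t+r-1$, and let $H$ be an $r$-partite $r$-graph with $|E(H)|>\frac{t-1}{r}\,|\partial H|$. Then there is an $r$-graph $H'\subseteq H$ with at least one edge such that $\delta_{(1,2,\dots,r)}(H')\ge (t_1,t_2,\dots,t_r)$.
   Context: An $r$-graph is an $r$-uniform hypergraph. An $r$-graph is $r$-partite if its vertex set can be partitioned into $r$ classes such that every edge contains exactly one vertex from each class. The shadow $\partial H$ of an $r$-graph $H$ is the set of all $(r-1)$-element sets contained in some edge of $H$. For an $r$-partite $r$-graph $H$ (with partition inherited from the ambient $r$-partition), we write $\delta_{(1,2,\dots,r)}(H)\ge (t_1,\dots,t_r)$ if the partition classes can be labeled $V_1,\dots,V_r$ so that for each $i\in[r]$, every $S\in\partial H$ with $S\cap V_i=\emptyset$ is contained in at least $t_i$ edges of $H$. *)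

From mathcomp Require Import all_boot all_fingroup.
Set Implicit Arguments. Unset Strict Implicit. Unset Printing Implicit Defensive.

(* A hypergraph on a finite vertex type T is a set of edges {set {set T}}.
   The ambient r-partition is given by a colouring c : T -> 'I_r
   (class V_i = c^-1(i)). *)

Definition rpartite (T : finType) (r : nat) (c : T -> 'I_r) (H : {set {set T}}) : Prop :=
  forall e, e \in H -> forall i : 'I_r, #|[set x in e | c x == i]| = 1.

Definition shadow (T : finType) (r : nat) (H : {set {set T}}) : {set {set T}} :=
  [set S : {set T} | [exists e in H, (S \subset e) && (#|S| == r.-1)]].

Definition codeg (T : finType) (H : {set {set T}}) (S : {set T}) : nat :=
  #|[set e in H | S \subset e]|.

(* delta_(1,...,r)(H) >= (t_1,...,t_r): the classes can be labelled
   V_1..V_r (labelling = permutation s, V_i := class s i) so that every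
   S in the shadow missing V_i lies in at least t_i edges. *)
Definition min_pos_codeg (T : finType) (r : nat) (c : T -> 'I_r)
    (H : {set {set T}}) (ts : 'I_r -> nat) : Prop :=
  exists s : {perm 'I_r}, forall i : 'I_r, forall S, S \in shadow r H ->
    [forall x in S, c x != s i] -> ts i <= codeg H S.

(* For a labelling s of the classes, weigh each shadow set S by the sum of
   t_i - 1 over the i such that S misses the class s i.  If the total weight
   is below |H|, deleting all edges through a shadow set S of codegree below
   t_i (with S missing s i) removes at most t_i - 1 edges and removes S, of
   weight at least t_i - 1, from the shadow; so the deletion process stops at
   a nonempty subgraph with the required codegrees.  An (r-1)-set in the
   shadow of an r-partite graph misses at most one class, so over the r
   cyclic labellings the average total weight is at most (t-1)|dH|/r < |H|. *)

From mathcomp Require Import all_boot all_fingroup.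
From mathcomp Require Import ssralg zmodp zify.

Set Implicit Arguments. Unset Strict Implicit. Unset Printing Implicit Defensive.

Lemma exists_lt_of_sum_lt (I : finType) (F : I -> nat) (m : nat) :
  \sum_(i : I) F i < #|I| * m -> exists i, F i < m.
Proof.
move=> sumF; apply/existsP; apply: contraTT sumF => /existsPn ge_m.
rewrite -leqNgt -sum_nat_const; apply: leq_sum => i _.
by rewrite leqNgt ge_m.
Qed.

Lemma sum_predn (I : finType) (F : I -> nat) :
  (forall i, 0 < F i) -> \sum_(i : I) (F i).-1 = \sum_(i : I) F i - #|I|.
Proof.
move=> F_gt0; rewrite -sum1_card [X in _ = X - _](eq_bigr (fun i => (F i).-1 + 1)).
  by rewrite big_split addnK.
by move=> i _; rewrite addn1 prednK.
Qed.

Section MissWeight.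

Variables (T : finType) (r : nat) (c : T -> 'I_r) (ts : 'I_r -> nat).

Definition missed_classes (S : {set T}) : {set 'I_r} :=
  [set j | [forall x in S, c x != j]].

Definition miss_weight (s : 'I_r -> 'I_r) (S : {set T}) : nat :=
  \sum_(i | s i \in missed_classes S) (ts i).-1.

Definition shadow_weight (s : 'I_r -> 'I_r) (H : {set {set T}}) : nat :=
  \sum_(S in shadow r H) miss_weight s S.

Lemma card_missed_classes_shadow (H : {set {set T}}) (S : {set T}) :
  rpartite c H -> S \in shadow r H -> #|missed_classes S| <= 1.
Proof.
move=> partH; rewrite inE => /exists_inP [e eH /andP [Se /eqP cardS]].
have inj_c : {in S &, injective c}.
  move=> x y /(subsetP Se) xe /(subsetP Se) ye cxy.
  have /card_le1_eqP : #|[set z in e | c z == c x]| <= 1 by rewrite (partH e eH).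
  by apply; rewrite inE ?xe ?ye ?cxy eqxx.
have -> : missed_classes S = ~: (c @: S).
  apply/setP => j; rewrite !inE; apply/forall_inP/negP => [notj /imsetP [x xS jx]|].
    by have := notj x xS; rewrite jx eqxx.
  by move=> notj x xS; apply/eqP => cxj; apply: notj; rewrite -cxj imset_f.
by rewrite cardsCs setCK card_ord (card_in_imset inj_c) cardS; lia.
Qed.

Lemma codeg_shadow_gt0 (H : {set {set T}}) (S : {set T}) :
  S \in shadow r H -> 0 < codeg H S.
Proof.
rewrite inE => /exists_inP [e eH /andP [Se _]].
by apply/card_gt0P; exists e; rewrite inE eH.
Qed.

Section Deletion.

Variables (H : {set {set T}}) (S : {set T}).

Let H_S := H :\: [set e : {set T} | S \subset e].

Lemma card_setD_supsets : #|H_S| + codeg H S = #|H|.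
Proof.
rewrite -(cardsID [set e : {set T} | S \subset e] H) addnC; congr (_ + _).
by rewrite /codeg; apply: eq_card => e; rewrite !inE.
Qed.

Lemma shadow_setD_supsets : shadow r H_S \subset shadow r H :\ S.
Proof.
apply/subsetP => S'; rewrite !inE => /exists_inP [e].
rewrite !inE => /andP [not_Se eH] /andP [S'e cardS'].
apply/andP; split; first by apply: contraNneq not_Se => <-.
by apply/exists_inP; exists e; rewrite // S'e.
Qed.

Lemma shadow_weight_setD_supsets (s : 'I_r -> 'I_r) (i : 'I_r) :
  S \in shadow r H -> s i \in missed_classes S ->
  shadow_weight s H_S + (ts i).-1 <= shadow_weight s H.
Proof.
move=> SH missed_i; rewrite /shadow_weight (big_setD1 S SH) /= addnC.
apply: leq_add; first by rewrite /miss_weight (bigD1 i) ?leq_addr.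
apply: (@sub_le_big _ addn leq leqnn (fun x y => leq_addr y x)) => S'.
exact: subsetP shadow_setD_supsets S'.
Qed.

End Deletion.

Lemma exists_min_pos_codeg_sub (s : {perm 'I_r}) (H : {set {set T}}) :
  shadow_weight s H < #|H| ->
  exists H' : {set {set T}}, [/\ H' \subset H, H' != set0 & min_pos_codeg c H' ts].
Proof.
elim: {H}_.+1 {-2}H (ltnSn #|H|) => // n IHn H cardH small_weight.
have [all_good | ] := boolP [forall i, forall S in shadow r H,
    (s i \in missed_classes S) ==> (ts i <= codeg H S)].
  exists H; split => //; first by rewrite -card_gt0 (leq_ltn_trans _ small_weight).
  exists s => i S SH missed_i; move/forallP/(_ i)/forall_inP/(_ S SH): all_good.
  by rewrite inE missed_i.
rewrite negb_forall => /existsP [i]; rewrite negb_forall_in => /exists_inP [S SH].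
rewrite negb_imply -ltnNge => /andP [missed_i low_codeg].
have card_HS := card_setD_supsets H S.
have weight_HS := shadow_weight_setD_supsets SH missed_i.
have codeg_gt0 := codeg_shadow_gt0 SH.
set H_S := H :\: _ in card_HS weight_HS.
have smaller : #|H_S| < n by lia.
have lighter : shadow_weight s H_S < #|H_S| by lia.
have [H' [H'sub H'ne H'good]] := IHn H_S smaller lighter.
by exists H'; split => //; apply: subset_trans H'sub (subsetDl _ _).
Qed.

End MissWeight.

Definition shift_perm (n : nat) (k : 'I_n.+1) : {perm 'I_n.+1} :=
  perm (@GRing.addIr _ k).

Lemma sum_shift_miss_weight (T : finType) (n : nat) (c : T -> 'I_n.+1)
    (ts : 'I_n.+1 -> nat) (S : {set T}) :
  \sum_(k < n.+1) miss_weight c ts (shift_perm k) S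
  = (\sum_(i < n.+1) (ts i).-1) * #|missed_classes c S|.
Proof.
rewrite /miss_weight (exchange_big_dep xpredT) //= big_distrl /=.
apply: eq_bigr => i _; rewrite sum_nat_cond_const mulnC; congr (_ * _).
rewrite -[RHS](card_preimset _ (@GRing.addrI _ i)); apply: eq_card => k.
by rewrite !inE permE.
Qed.

Lemma sum_shift_shadow_weight (T : finType) (n : nat) (c : T -> 'I_n.+1)
    (ts : 'I_n.+1 -> nat) (H : {set {set T}}) :
  rpartite c H ->
  \sum_(k < n.+1) shadow_weight c ts (shift_perm k) H
  <= (\sum_(i < n.+1) (ts i).-1) * #|shadow n.+1 H|.
Proof.
move=> partH; rewrite exchange_big /= mulnC -sum_nat_const; apply: leq_sum => S SH.
rewrite sum_shift_miss_weight -[leqRHS]muln1 leq_mul //.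
exact: card_missed_classes_shadow partH SH.
Qed.

Theorem lemma2p1 (T : finType) (r t : nat) (ts : 'I_r -> nat)
    (c : T -> 'I_r) (H : {set {set T}}) :
  0 < r -> 0 < t -> (forall i, 0 < ts i) ->
  \sum_(i < r) ts i = t + r - 1 ->
  rpartite c H ->
  (t - 1) * #|shadow r H| < r * #|H| ->
  exists H' : {set {set T}},
    [/\ H' \subset H, H' != set0 & min_pos_codeg c H' ts].
Proof.
case: r ts c => [//|n] ts c _ _ ts_gt0 sum_ts partH dense.
have sum_predn_ts : \sum_(i < n.+1) (ts i).-1 = t - 1.
  by rewrite sum_predn // card_ord sum_ts; lia.
have [k light_k] : exists k, shadow_weight c ts (shift_perm k) H < #|H|.
  apply: exists_lt_of_sum_lt; rewrite card_ord.
  by apply: leq_ltn_trans (sum_shift_shadow_weight ts partH) _; rewrite sum_predn_ts.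
exact: exists_min_pos_codeg_sub light_k.
Qed.
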